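(* Let $G$ be a finite induced regular group with $[G:Z(G)]=p^q$, where $p$ and $q$ are primes. Then $G/Z(G)$ is an elementary $p$-group. Moreover, for each $x\in G\setminus Z(G)$, $|\beta_G(x)|=(p-1)|Z(G)|$.
   Context: For a finite group $G$, $C_G(x)$ denotes the centralizer of $x\in G$ and $Z(G)$ the center; $\beta_G(x)=\{y\in G\mid C_G(y)=C_G(x)\}$. The non-centralizer graph $\Upsilon_G$ is the simple graph with vertex set $G$ in which two distinct vertices $x,y$ are adjacent iff $C_G(x)\neq C_G(y)$; the induced non-centralizer graph $\Upsilon_{G\setminus Z(G)}$ is its induced subgraph on $G\setminus Z(G)$. $G$ is called induced regular if $\Upsilon_{G\setminus Z(G)}$ is a regular graph. A group is called an elementary $p$-group if every non-identity element has order exactly $p$ (it need not be abelian). *)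

From mathcomp Require Import all_boot all_fingroup all_solvable.
Set Implicit Arguments. Unset Strict Implicit. Unset Printing Implicit Defensive.
Local Open Scope group_scope.

Definition beta (gT : finGroupType) (G : {set gT}) (x : gT) : {set gT} :=
  [set y in G | 'C_G[y] == 'C_G[x]].

Definition noncent_adj (gT : finGroupType) (G : {set gT}) (x y : gT) : bool :=
  (x != y) && ('C_G[x] != 'C_G[y]).

Definition induced_deg (gT : finGroupType) (G : {group gT}) (x : gT) : nat :=
  #|[set y in G :\: 'Z(G) | noncent_adj G x y]|.

Definition induced_regular (gT : finGroupType) (G : {group gT}) : Prop :=
  exists k, forall x, x \in G :\: 'Z(G) -> induced_deg G x = k.

Definition elementary_pgroup (gT : finGroupType) (p : nat) (H : {set gT}) : Prop :=
  forall x, x \in H -> x != 1 -> #[x] = p.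

From mathcomp Require Import all_boot all_fingroup all_solvable zify.
Set Implicit Arguments. Unset Strict Implicit. Unset Printing Implicit Defensive.

(* Regularity of the induced graph forces all classes beta(x), x outside Z(G),
   to have a common size b; as they partition G \ Z(G), b divides
   (p^q - 1)|Z(G)|.  For x with a maximal centraliser,
   beta(x) = Z(C_G(x)) \ Z(G), so b = (p^j - 1)|Z(G)| with 0 < j < q, and
   p^j - 1 | p^q - 1 forces j | q, i.e. j = 1.  Finally, every w whose coset
   generates the same cyclic subgroup as yZ(G) lies in beta(y), so
   |Z(G)| phi(o(yZ(G))) <= (p - 1)|Z(G)|, which for o(yZ(G)) = p^e forces e = 1. *)

Lemma dvdn_pred_expn p j n : 1 < p -> 0 < j ->
  (p ^ j).-1 %| (p ^ n).-1 -> j %| n.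
Proof.
move=> p_gt1 j_gt0; rewrite (divn_eq n j) dvdn_addr ?dvdn_mull //.
set r := n %% j; rewrite mulnC expnD expnM.
(* With n = k j + r: p^n - 1 = (p^(jk) - 1) p^r + (p^r - 1) and 0 <= p^r - 1 < p^j - 1. *)
have predM a b : 0 < a -> (a * b).-1 = a.-1 * b + b.-1.
  by case: a => // a _; rewrite /= mulSn -!subn1; nia.
rewrite predM ?expn_gt0 ?(ltnW p_gt1) // dvdn_addr ?dvdn_mulr ?dvdn_pred_predX //.
have pr_lt_pj : p ^ r < p ^ j by rewrite ltn_exp2l ?ltn_mod.
have pr_gt0 : 0 < p ^ r by rewrite expn_gt0 ltnW.
case: (posnP (p ^ r).-1) => [pr_eq1 | pr_gt1] dvd_r.
  have : p ^ r = p ^ 0 by rewrite expn0; lia.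
  by move/(expnI p_gt1) ->.
by have := dvdn_leq pr_gt1 dvd_r; lia.
Qed.

Local Open Scope group_scope.

Lemma cardsD_index (gT : finGroupType) (H K : {group gT}) :
  H \subset K -> #|K :\: H| = (#|K : H|.-1 * #|H|)%N.
Proof.
move=> sHK; rewrite cardsD (setIidPr sHK) -{1}(Lagrange sHK) mulnC.
by rewrite -subn1 mulnBl mul1n.
Qed.

Lemma card_cosetpre_set (gT : finGroupType) (H : {group gT}) (L : {set coset_of H}) :
  #|coset H @*^-1 L| = (#|H| * #|L|)%N.
Proof.
have [n leLn] := ubnP #|L|; elim: n L leLn => // n IHn L.
have [-> _ | [C LC]] := set_0Vmem L; first by rewrite morphpre0 !cards0 muln0.
have [x Nx defC] := cosetP C; rewrite {C}defC in LC.
rewrite -(setD1K LC) morphpreU cardsU1 !inE eqxx add1n ltnS => leLn.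
have disjx : [set coset H x] :&: (L :\ coset H x) = set0.
  by apply/setP=> C; rewrite !inE; case: eqP => // ->; rewrite eqxx.
rewrite cardsU -morphpreI disjx morphpre0 cards0 subn0.
by rewrite cosetpre_set1 // card_rcoset IHn // mulnSr addnC.
Qed.

Section BetaClasses.
Variables (gT : finGroupType) (G : {group gT}).
Local Notation D := (G :\: 'Z(G)).

Lemma subcent1_eqG x : x \in G -> ('C_G[x] == G) = (x \in 'Z(G)).
Proof.
by move=> Gx; rewrite eqEsubset subsetIl subsetI subxx sub_cent1 inE Gx.
Qed.

Lemma beta_sub_noncentral x : x \in D -> beta G x \subset D.
Proof.
case/setDP=> Gx nZx; apply/subsetP=> y; rewrite inE => /andP[Gy /eqP eq_yx].
by rewrite in_setD Gy andbT -(subcent1_eqG Gy) eq_yx subcent1_eqG.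
Qed.

Lemma induced_degE x : x \in D -> induced_deg G x = (#|D| - #|beta G x|)%N.
Proof.
move=> Dx; rewrite -(setIidPr (beta_sub_noncentral Dx)) -cardsD.
apply: eq_card => y; rewrite !inE /noncent_adj.
case: (y \in G) (y \in 'C(G)) => [] [] //=; rewrite ?andbF // andbT.
by have [->|_] := eqVneq x y; rewrite ?eqxx //= eq_sym.
Qed.

Lemma induced_regular_card_beta :
  induced_regular G -> {in D &, forall x y, #|beta G x| = #|beta G y|}.
Proof.
move=> [k regG] x y Dx Dy.
have := subset_leq_card (beta_sub_noncentral Dx).
have := subset_leq_card (beta_sub_noncentral Dy).
have := regG x Dx; have := regG y Dy.
rewrite !induced_degE // => degy degx le_y le_x.
by rewrite -(subKn le_x) -(subKn le_y) degx degy.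
Qed.

Lemma beta_partition : partition [set beta G x | x in D] D.
Proof.
pose sameC x y := 'C_G[x] == 'C_G[y].
have -> : [set beta G x | x in D] = equivalence_partition sameC D.
  apply: eq_in_imset => x Dx; apply/setP=> y.
  rewrite -(setIidPr (beta_sub_noncentral Dx)) !inE eq_sym.
  by case: (y \in G); rewrite ?andbF.
apply: equivalence_partitionP => x y z _ _ _; rewrite /sameC eqxx.
by split=> // /eqP ->.
Qed.

Lemma card_beta_dvdn x :
  {in D &, forall y z, #|beta G y| = #|beta G z|} -> x \in D ->
  (#|beta G x| %| #|D|)%N.
Proof.
move=> eq_card_beta Dx.
rewrite (@card_uniform_partition _ #|beta G x| _ _ _ beta_partition) ?dvdn_mull //.
by move=> _ /imsetP[y Dy ->]; apply: eq_card_beta.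
Qed.

Lemma subcent1_center x y : y \in 'Z('C_G[x]) -> 'C_G[x] \subset 'C_G[y].
Proof.
case/centerP=> _ cy; rewrite subsetI subsetIl /=.
by apply/subsetP=> z /cy/commute_sym/cent1P.
Qed.

Lemma beta_sub_center_subcent1 x : beta G x \subset 'Z('C_G[x]).
Proof.
apply/subsetP=> y; rewrite inE => /andP[Gy /eqP <-].
apply/centerP; split; first exact: subcent1_id.
by move=> z /subcent1P[_ /commute_sym].
Qed.

Lemma beta_max_subcent1 x :
    x \in D -> {in D, forall y, #|'C_G[y]| <= #|'C_G[x]|} ->
  beta G x = 'Z('C_G[x]) :\: 'Z(G).
Proof.
move=> Dx maxCx; apply/eqP; rewrite eqEsubset; apply/andP; split.
  have := beta_sub_noncentral Dx; rewrite !subsetD => /andP[_ ->].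
  by rewrite beta_sub_center_subcent1.
apply/subsetP=> y /setDP[Zy nZy].
have sCxCy := subcent1_center Zy.
have /subcent1P[Gy _] := subsetP (center_sub _) y Zy.
by rewrite inE Gy eq_sym eqEcard sCxCy maxCx // in_setD nZy Gy.
Qed.

Lemma subcent1_coset x y : x \in G -> y \in G ->
  coset 'Z(G) y \in <[coset 'Z(G) x]> -> 'C_G[x] \subset 'C_G[y].
Proof.
move=> Gx Gy /cycleP[a]; have nZG := normal_norm (center_normal G).
rewrite -morphX ?(subsetP nZG) // => /rcoset_kercosetP.
case/(_ (subsetP nZG y Gy) (subsetP nZG _ (groupX a Gx)))/rcosetP=> z Zz ->.
apply/subsetP=> g /subcent1P[Gg cxg]; apply/subcent1P; split=> //.
apply/commute_sym/commuteM; last exact/commuteX/commute_sym.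
by case/centerP: Zz => _ /(_ g Gg)/commute_sym.
Qed.

Lemma totient_card_beta y :
  y \in G -> (#|'Z(G)| * totient #[coset 'Z(G) y] <= #|beta G y|)%N.
Proof.
move=> Gy; rewrite totient_gen -card_cosetpre_set; apply: subset_leq_card.
apply/subsetP=> w /morphpreP[Nw]; rewrite inE /generator => /eqP genXw.
have Xw : coset 'Z(G) w \in <[coset 'Z(G) y]> by rewrite genXw cycle_id.
have Gw : w \in G.
  rewrite -(quotientGK (center_normal G)) mem_morphpre //.
  by rewrite (subsetP _ _ Xw) // cycle_subG mem_quotient.
have Xy : coset 'Z(G) y \in <[coset 'Z(G) w]> by rewrite -genXw cycle_id.
by rewrite inE Gw eqEsubset !subcent1_coset.
Qed.

Lemma card_beta_max_subcent1 p q x :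
    prime p -> #|G : 'Z(G)| = (p ^ q)%N ->
    x \in D -> {in D, forall y, #|'C_G[y]| <= #|'C_G[x]|} ->
  exists2 j, 0 < j < q & #|beta G x| = ((p ^ j).-1 * #|'Z(G)|)%N.
Proof.
move=> p_pr indexZ Dx maxCx; have /setDP[Gx nZx] := Dx.
have sZB : 'Z(G) \subset 'Z('C_G[x]).
  apply/subsetP=> z /centerP[Gz cGz]; apply/centerP; split.
    by apply/subcent1P; split; last exact/commute_sym/cGz.
  by move=> g /subcent1P[Gg _]; apply: cGz.
have sBG : 'Z('C_G[x]) \subset G := subset_trans (center_sub _) (subcent1_sub x G).
have /dvdn_pfactor[//|j _ indexB] : (#|'Z('C_G[x]) : 'Z(G)| %| p ^ q)%N.
  by rewrite -indexZ -(Lagrange_index sBG sZB) dvdn_mull.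
have card_beta : #|beta G x| = ((p ^ j).-1 * #|'Z(G)|)%N.
  by rewrite (beta_max_subcent1 Dx maxCx) cardsD_index // indexB.
exists j => //; apply/andP; split.
  have : 0 < #|beta G x| by apply/card_gt0P; exists x; rewrite inE Gx eqxx.
  by rewrite card_beta muln_gt0 => /andP[]; case: j {indexB card_beta}.
have ltCG : 'C_G[x] \proper G by rewrite properEneq subcent1_eqG // nZx subcent1_sub.
rewrite -(ltn_exp2l _ _ (prime_gt1 p_pr)) -indexB -indexZ.
rewrite -(ltn_pmul2l (cardG_gt0 'Z(G))) !Lagrange ?center_sub //.
exact: leq_ltn_trans (subset_leq_card (center_sub _)) (proper_card ltCG).
Qed.

Lemma card_beta_induced_regular p q :
    prime p -> prime q -> induced_regular G -> #|G : 'Z(G)| = (p ^ q)%N ->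
  {in D, forall x, #|beta G x| = (p.-1 * #|'Z(G)|)%N}.
Proof.
move=> p_pr q_pr /induced_regular_card_beta eq_card_beta indexZ.
have p_gt1 := prime_gt1 p_pr.
have cardD : #|D| = ((p ^ q).-1 * #|'Z(G)|)%N.
  by rewrite cardsD_index ?center_sub ?indexZ.
have [x0 Dx0] : exists x0, x0 \in D.
  apply/set0Pn; rewrite -card_gt0 cardD muln_gt0 cardG_gt0 andbT -subn1 subn_gt0.
  by rewrite -{1}(expn0 p) ltn_exp2l ?prime_gt0.
have [x Dx maxCx] := arg_maxnP (fun y => #|'C_G[y]|) Dx0.
have [j /andP[j_gt0 j_lt_q] card_beta_x] :=
  card_beta_max_subcent1 p_pr indexZ Dx maxCx.
have j_eq1 : j = 1%N.
  have : ((p ^ j).-1 %| (p ^ q).-1)%N.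
    by have := card_beta_dvdn eq_card_beta Dx; rewrite card_beta_x cardD dvdn_pmul2r.
  move/(dvdn_pred_expn p_gt1 j_gt0); case/primeP: q_pr => _ /[apply].
  by case/orP=> /eqP // j_eq_q; rewrite j_eq_q ltnn in j_lt_q.
by move=> y Dy; rewrite (eq_card_beta y x) // card_beta_x j_eq1 expn1.
Qed.

Lemma elementary_quotient_center p :
    prime p -> p.-group (G / 'Z(G)) ->
    {in D, forall x, #|beta G x| <= p.-1 * #|'Z(G)|}%N ->
  elementary_pgroup p (G / 'Z(G)).
Proof.
move=> p_pr pGZ card_beta _ /morphimP[y Ny Gy ->] X_neq1.
have Dy : y \in D.
  by rewrite in_setD Gy andbT; apply: contra X_neq1 => Zy; apply/eqP/coset_id.
have [e oX] := p_natP (pnat_dvd (order_dvdG (mem_quotient _ Gy)) pGZ).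
have e_gt0 : 0 < e.
  by case: e oX => // /eqP; rewrite order_eq1 (negbTE X_neq1).
have := leq_trans (totient_card_beta Gy) (card_beta y Dy).
rewrite oX totient_pfactor // mulnCA leq_pmul2l ?ltn_predRL ?prime_gt1 //.
rewrite -{2}[#|_|]muln1 leq_pmul2l ?cardG_gt0 //.
rewrite -[X in _ <= X](expn0 p) leq_exp2l ?prime_gt1 // leqn0 => /eqP e1.
by rewrite -(prednK e_gt0) e1.
Qed.
End BetaClasses.

Theorem proposition3p6 (gT : finGroupType) (G : {group gT}) (p q : nat) :
  prime p -> prime q -> induced_regular G -> #|G : 'Z(G)| = (p ^ q)%N ->
  elementary_pgroup p (G / 'Z(G)) /\
  (forall x, x \in G :\: 'Z(G) -> #|beta G x| = ((p - 1) * #|'Z(G)|)%N).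
Proof.
move=> p_pr q_pr regG indexZ.
have card_beta := card_beta_induced_regular p_pr q_pr regG indexZ.
have pGZ : p.-group (G / 'Z(G)).
  rewrite /pgroup card_quotient ?normal_norm ?center_normal //.
  by rewrite indexZ pnatX pnat_id.
split=> [|x Dx]; last by rewrite card_beta // subn1.
by apply: elementary_quotient_center pGZ _ => // x Dx; rewrite card_beta.
Qed.
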